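(* Let $L>0$, $l\ge2$ an integer, and let real coefficients $a_{l+j,l-j},b_{l+j,l-j}$ ($j=1,\dots,l-1$) satisfy the Coefficient Conditions. Then there is a constant $M>0$ depending only on $l$ and these coefficients such that every $u\in C^{2l+1}([0,L])$ satisfying the Boundary Conditions obeys $$\sum_{j=1}^{l}(-1)^{j+1}(D^{2j+1}u,u)\ \ge\ M\Big(\sum_{i=1}^{l-1}\big[(D^iu(L))^2+(D^iu(0))^2\big]+(D^lu(0))^2\Big)\ \ge 0.$$
   Context: $D^i=\frac{d^i}{dx^i}$, $(f,g)=\int_0^L fg\,dx$. Boundary Conditions: $u(0)=u(L)=D^lu(L)=0$; $D^{l+j}u(0)=a_{l+j,l-j}D^{l-j}u(0)$ and $D^{l+j}u(L)=b_{l+j,l-j}D^{l-j}u(L)$ for $j=1,\dots,l-1$. Coefficient Conditions: - If $l=2$: $b_{3,1}>\tfrac12$ and $a_{3,1}<\tfrac12$. - If $l=3$: $b_{5,1}<-\tfrac12$, $b_{4,2}>\tfrac12$, $a_{5,1}>\tfrac12$, $a_{4,2}<\tfrac12$. - If $l\ge4$: $b_{l+1,l-1}>l-2$, $b_{l+2,l-2}<2-l$, $a_{l+1,l-1}<5-2l$, $a_{l+2,l-2}>2l-5$; for odd $j$ with $3\le j\le l-1$: $b_{l+j,l-j}>l-2+\frac12\big(\sum_{m=1}^{(j-1)/2}|b_{l+2m-1,l-2m+1}|\big)^2$ and $a_{l+j,l-j}<5-2l-\frac12\big(\sum_{m=1}^{(j-1)/2}|a_{l+2m-1,l-2m+1}|\big)^2$;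 for even $j$ with $4\le j\le l-1$: $b_{l+j,l-j}<2-l-\frac12\big(\sum_{m=1}^{j/2-1}|b_{l+2m,l-2m}|\big)^2$ and $a_{l+j,l-j}>2l-5+\frac12\big(\sum_{m=1}^{j/2-1}|a_{l+2m,l-2m}|\big)^2$. *)

From Stdlib Require Import Reals Lra Lia Classical ClassicalEpsilon.
Open Scope R_scope.

Fixpoint sum1 (f : nat -> R) (n : nat) : R :=
  match n with
  | O => 0
  | S n' => sum1 f n' + f n
  end.

Definition cont_on (f : R -> R) (a b : R) : Prop :=
  forall x, a <= x <= b -> forall eps, 0 < eps ->
    exists delta, 0 < delta /\
      forall y, a <= y <= b -> Rabs (y - x) < delta -> Rabs (f y - f x) < eps.

(* d is the family of derivatives D^0 u = d 0, ..., D^k u = d k of a function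
   u = d 0 in C^k([0,L]): every d i (i <= k) is continuous on [0,L], and
   d (i+1) is the derivative of d i on (0,L); values at the endpoints are the
   (one-sided) derivatives, i.e. the continuous extensions. *)
Definition Ck_on (k : nat) (L : R) (d : nat -> R -> R) : Prop :=
  (forall i, (i <= k)%nat -> cont_on (d i) 0 L) /\
  (forall i x, (i < k)%nat -> 0 < x < L -> derivable_pt_lim (d i) x (d (S i) x)).

(* Riemann integral of f over [a,b] (0 if f not Riemann integrable; the value
   does not depend on the integrability proof, RiemannInt_P5). *)
Definition RInt (f : R -> R) (a b : R) : R :=
  match excluded_middle_informative (inhabited (Riemann_integrable f a b)) with
  | left h => RiemannInt (epsilon h (fun _ => True))
  | right _ => 0
  end.

Definition ip (L : R) (f g : R -> R) : R := RInt (fun x => f x * g x) 0 L.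

Definition BC (l : nat) (L : R) (a b : nat -> nat -> R) (d : nat -> R -> R) : Prop :=
  d 0%nat 0 = 0 /\ d 0%nat L = 0 /\ d l L = 0 /\
  (forall j, (1 <= j <= l - 1)%nat ->
     d (l + j)%nat 0 = a (l + j)%nat (l - j)%nat * d (l - j)%nat 0 /\
     d (l + j)%nat L = b (l + j)%nat (l - j)%nat * d (l - j)%nat L).

Definition CoefCond (l : nat) (a b : nat -> nat -> R) : Prop :=
  (l = 2%nat -> b 3%nat 1%nat > 1/2 /\ a 3%nat 1%nat < 1/2) /\
  (l = 3%nat -> b 5%nat 1%nat < -(1/2) /\ b 4%nat 2%nat > 1/2 /\
                a 5%nat 1%nat > 1/2 /\ a 4%nat 2%nat < 1/2) /\
  ((4 <= l)%nat ->
     b (l+1)%nat (l-1)%nat > INR l - 2 /\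
     b (l+2)%nat (l-2)%nat < 2 - INR l /\
     a (l+1)%nat (l-1)%nat < 5 - 2 * INR l /\
     a (l+2)%nat (l-2)%nat > 2 * INR l - 5 /\
     (forall j, (3 <= j <= l - 1)%nat -> Nat.odd j = true ->
        b (l+j)%nat (l-j)%nat > INR l - 2 + 1/2 *
          (sum1 (fun m => Rabs (b (l + 2*m - 1)%nat (l - 2*m + 1)%nat)) ((j-1)/2)) ^ 2 /\
        a (l+j)%nat (l-j)%nat < 5 - 2 * INR l - 1/2 *
          (sum1 (fun m => Rabs (a (l + 2*m - 1)%nat (l - 2*m + 1)%nat)) ((j-1)/2)) ^ 2) /\
     (forall j, (4 <= j <= l - 1)%nat -> Nat.even j = true ->
        b (l+j)%nat (l-j)%nat < 2 - INR l - 1/2 *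
          (sum1 (fun m => Rabs (b (l + 2*m)%nat (l - 2*m)%nat)) (j/2 - 1)) ^ 2 /\
        a (l+j)%nat (l-j)%nat > 2 * INR l - 5 + 1/2 *
          (sum1 (fun m => Rabs (a (l + 2*m)%nat (l - 2*m)%nat)) (j/2 - 1)) ^ 2)).

(* Integrating by parts [j] times, [(D^(2j+1) u, u)] is the difference between [x = L] and
   [x = 0] of a quadratic form [Phi_j] in the boundary values [x_i = D^i u], so the left-hand
   side is [F(u(L)) - F(u(0))] with [F = sum_j Phi_j].  The boundary conditions express
   [x_(l+m)] as [c_m x_(l-m)], turning [F] into a quadratic form in [x_1, ..., x_l] whose
   diagonal carries the coefficients [+- c_m].  Every remaining product is split by AM-GM
   (products through a reflected index [l + m] with weights built from partial sums of
   [|c_m|]); counting how often each [x_i^2] is charged shows that, for [l >= 4], the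
   Coefficient Conditions leave every diagonal entry of [F] at [L] and of [-F] at [0] at
   least [1/4].  At [L] the top value [x_l] vanishes; at [0] it is protected by the
   unbalanced split [|x_l y| <= x_l^2/(2l) + l y^2/2].  For [l = 2, 3] the form is
   completed by hand. *)

From Stdlib Require Import Reals Lra Lia List ClassicalEpsilon.
Import ListNotations.
Open Scope R_scope.

(** * Fundamental theorem of calculus up to the endpoints *)

Definition clamp (L y : R) : R := Rmax 0 (Rmin y L).

Lemma clamp_in L y : 0 <= L -> 0 <= clamp L y <= L.
Proof. intros; unfold clamp, Rmax, Rmin; repeat destruct Rle_dec; lra. Qed.

Lemma clamp_id L y : 0 <= y <= L -> clamp L y = y.
Proof. intros; unfold clamp, Rmax, Rmin; repeat destruct Rle_dec; lra. Qed.

Lemma clamp_lipschitz L x y : 0 <= L -> Rabs (clamp L y - clamp L x) <= Rabs (y - x).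
Proof.
  intros; unfold clamp, Rmax, Rmin; repeat destruct Rle_dec;
    unfold Rabs; repeat destruct Rcase_abs; lra.
Qed.

Lemma continuity_pt_clamp f L x : 0 <= L -> cont_on f 0 L ->
  continuity_pt (fun y => f (clamp L y)) x.
Proof.
  intros HL Hf eps Heps.
  destruct (Hf (clamp L x) (clamp_in L x HL) eps Heps) as [del [Hdel Hy]].
  exists del; split; [exact Hdel|]. intros y [_ Hyx]. apply Hy.
  - apply clamp_in, HL.
  - eapply Rle_lt_trans; [apply clamp_lipschitz, HL | exact Hyx].
Qed.

Lemma RInt_eq_RiemannInt f a b (pr : Riemann_integrable f a b) : RInt f a b = RiemannInt pr.
Proof.
  unfold RInt. destruct (excluded_middle_informative _) as [i|n].
  - apply RiemannInt_P5.
  - exfalso; apply n; constructor; exact pr.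
Qed.

Lemma RInt_FTC L h G : 0 < L ->
  (forall x, continuity_pt (fun y => h (clamp L y)) x) ->
  (forall x, continuity_pt (fun y => G (clamp L y)) x) ->
  (forall x, 0 < x < L -> derivable_pt_lim G x (h x)) ->
  RInt h 0 L = G L - G 0.
Proof.
  intros HL Hh HG HD.
  set (hc := fun y => h (clamp L y)).
  assert (HL' : 0 <= L) by lra.
  assert (Hhc : forall x, 0 <= x <= L -> continuity_pt hc x) by (intros; apply Hh).
  set (P := primitive HL' (FTC_P1 HL' Hhc)).
  pose proof (continuity_implies_RiemannInt HL' Hhc) as pr.
  assert (Hint : RInt h 0 L = P L - P 0).
  { assert (Hext : forall x, Rmin 0 L <= x <= Rmax 0 L -> hc x = h x).
    { intros x Hx. unfold hc. rewrite Rmin_left, Rmax_right in Hx by lra.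
      rewrite clamp_id; auto. }
    rewrite (RInt_eq_RiemannInt _ _ _ (@Riemann_integrable_ext hc h 0 L Hext pr)).
    rewrite <- (RiemannInt_P18 pr) by (auto; intros; apply Hext;
      rewrite Rmin_left, Rmax_right; lra).
    apply RiemannInt_P20. }
  assert (HP : forall x, 0 <= x <= L -> derivable_pt_lim P x (hc x))
    by (intros; apply RiemannInt_P28; auto).
  set (E := fun z => G (clamp L z) - P z).
  assert (HE : forall x, 0 < x < L -> derivable_pt_lim E x 0).
  { intros x Hx.
    apply (derivable_pt_lim_locally_ext (fun z => G z - P z) E x 0 L);
      [lra| intros z Hz; unfold E; rewrite clamp_id; lra|].
    replace 0 with (h x - hc x) by (unfold hc; rewrite clamp_id; lra).
    apply derivable_pt_lim_minus; [apply HD | apply HP]; lra. }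
  assert (HEc : forall x, 0 <= x <= L -> continuity_pt E x).
  { intros x Hx. apply continuity_pt_minus; [apply HG|].
    apply derivable_continuous_pt. exists (hc x). apply HP, Hx. }
  pose proof (null_derivative_loc E 0 L (fun x Hx => exist _ 0 (HE x Hx)) HEc
    (fun x Hx => derive_pt_eq_0 _ _ _ _ (HE x Hx)) L ltac:(lra)) as Hconst.
  unfold E in Hconst. rewrite !clamp_id in Hconst by lra. lra.
Qed.

Lemma sum1_ext f g n : (forall k, (1 <= k <= n)%nat -> f k = g k) -> sum1 f n = sum1 g n.
Proof.
  induction n as [|n IH]; intros H; simpl; [reflexivity|].
  rewrite IH, (H (S n)); [reflexivity| lia| intros; apply H; lia].
Qed.

Lemma sum1_scal c f n : sum1 (fun k => c * f k) n = c * sum1 f n.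
Proof. induction n; simpl; [ring| rewrite IHn; ring]. Qed.

Lemma sum1_plus f g n : sum1 (fun k => f k + g k) n = sum1 f n + sum1 g n.
Proof. induction n; simpl; [ring| rewrite IHn; ring]. Qed.

Lemma sum1_minus f g n : sum1 (fun k => f k - g k) n = sum1 f n - sum1 g n.
Proof. induction n; simpl; [ring| rewrite IHn; ring]. Qed.

Lemma sum1_0 n : sum1 (fun _ => 0) n = 0.
Proof. induction n; simpl; [reflexivity| rewrite IHn; ring]. Qed.

Lemma sum1_last f n : (1 <= n)%nat -> sum1 f n = sum1 f (n - 1) + f n.
Proof. intros Hn. replace n with (S (n - 1)) at 1 by lia. simpl. do 2 f_equal. lia. Qed.

Lemma sum1_le f g n : (forall k, (1 <= k <= n)%nat -> f k <= g k) -> sum1 f n <= sum1 g n.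
Proof.
  induction n as [|n IH]; intros H; simpl; [lra|].
  apply Rplus_le_compat; [apply IH; intros; apply H; lia | apply H; lia].
Qed.

Lemma sum1_nonneg f n : (forall k, (1 <= k <= n)%nat -> 0 <= f k) -> 0 <= sum1 f n.
Proof. intros H. rewrite <- (sum1_0 n). apply sum1_le, H. Qed.

Lemma sum1_term_le f n k : (forall i, (1 <= i <= n)%nat -> 0 <= f i) ->
  (1 <= k <= n)%nat -> f k <= sum1 f n.
Proof.
  induction n as [|n IH]; intros H Hk; [lia|]. simpl.
  destruct (Nat.eq_dec k (S n)) as [->|Hne].
  - assert (0 <= sum1 f n) by (apply sum1_nonneg; intros; apply H; lia). lra.
  - assert (0 <= f (S n)) by (apply H; lia).
    assert (f k <= sum1 f n) by (apply IH; [intros; apply H|]; lia). lra.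
Qed.

Lemma sum1_comm (f : nat -> nat -> R) n m :
  sum1 (fun j => sum1 (f j) n) m = sum1 (fun t => sum1 (fun j => f j t) m) n.
Proof.
  induction m as [|m IH]; simpl; [symmetry; apply sum1_0|].
  rewrite IH, <- sum1_plus. reflexivity.
Qed.

Lemma sum1_widen f j n : (j <= n)%nat ->
  sum1 f j = sum1 (fun t => if (t <=? j)%nat then f t else 0) n.
Proof.
  intros H. induction n as [|n IH].
  - replace j with 0%nat by lia. reflexivity.
  - destruct (Nat.eq_dec j (S n)) as [->|Hne]; cbn [sum1].
    + rewrite Nat.leb_refl. f_equal. apply sum1_ext. intros k Hk.
      destruct (Nat.leb_spec k (S n)); [reflexivity|lia].
    + rewrite IH by lia. destruct (Nat.leb_spec (S n) j); [lia| ring].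
Qed.

Lemma sum1_delta (f : nat -> R) s n :
  sum1 (fun t => if (t =? s)%nat then f t else 0) n =
  if ((1 <=? s) && (s <=? n))%bool then f s else 0.
Proof.
  induction n as [|n IH]; cbn [sum1].
  - destruct (Nat.leb_spec 1 s); destruct (Nat.leb_spec s 0); simpl; auto; lia.
  - rewrite IH. destruct (Nat.eqb_spec (S n) s) as [<-|Hne].
    + destruct (Nat.leb_spec (S n) n); [lia|]. rewrite Nat.leb_refl. simpl. ring.
    + destruct (Nat.leb_spec 1 s); destruct (Nat.leb_spec s n);
        destruct (Nat.leb_spec s (S n)); simpl; try ring; lia.
Qed.

Lemma sum1_shift (g : nat -> R) a N n : (a + N <= n)%nat ->
  sum1 (fun j => if ((a <? j) && (j <=? a + N))%bool then g (j - a)%nat else 0) n = sum1 g N.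
Proof.
  set (F := fun j => if ((a <? j) && (j <=? a + N))%bool then g (j - a)%nat else 0).
  assert (Hlow : forall m, (m <= a + N)%nat -> sum1 F m = sum1 g (m - a)).
  { induction m as [|m IH]; intros Hm; [reflexivity|]. cbn [sum1]. rewrite IH by lia. unfold F.
    destruct (Nat.ltb_spec a (S m)); destruct (Nat.leb_spec (S m) (a + N)); simpl andb; cbv iota; try lia.
    - replace (S m - a)%nat with (S (m - a)) by lia. reflexivity.
    - replace (S m - a)%nat with 0%nat by lia. replace (m - a)%nat with 0%nat by lia.
      simpl; ring. }
  assert (Hhigh : forall k, sum1 F (a + N + k) = sum1 g N).
  { induction k as [|k IH].
    - rewrite Nat.add_0_r, Hlow by lia. f_equal; lia.
    - replace (a + N + S k)%nat with (S (a + N + k)) by lia. cbn [sum1]. rewrite IH. unfold F.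
      destruct (Nat.leb_spec (S (a + N + k)) (a + N)); [lia|].
      rewrite Bool.andb_false_r. ring. }
  intros H. replace n with (a + N + (n - (a + N)))%nat by lia. apply Hhigh.
Qed.

Lemma sum1_sum1_count (F : nat -> nat -> R) (sg : nat -> nat) (P : nat -> bool) n m a b v :
  0 <= v ->
  (forall j t, (1 <= j <= n)%nat -> (1 <= t <= m)%nat ->
     F j t <= if ((t =? sg j) && P j)%bool then v else 0) ->
  (forall j, (1 <= j <= n)%nat -> P j = true -> (a <= j <= b)%nat) ->
  sum1 (fun j => sum1 (F j) m) n <= v * INR (b + 1 - a).
Proof.
  intros Hv HF HP.
  assert (Hrow : forall j, (1 <= j <= n)%nat -> sum1 (F j) m <= if P j then v else 0).
  { intros j Hj. eapply Rle_trans; [apply sum1_le; intros t Ht; apply HF; eauto|].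
    rewrite (sum1_ext _ (fun t => if (t =? sg j)%nat then (if P j then v else 0) else 0)).
    - rewrite sum1_delta. destruct (_ && _)%bool; [lra| destruct (P j); lra].
    - intros t _. destruct (t =? sg j)%nat, (P j); reflexivity. }
  eapply Rle_trans; [apply sum1_le, Hrow|].
  assert (G : forall k, (k <= n)%nat ->
    sum1 (fun j => if P j then v else 0) k <= v * INR (Nat.min k b + 1 - a)).
  { induction k as [|k IH]; intros Hk; cbn [sum1].
    - apply Rmult_le_pos; [exact Hv| apply pos_INR].
    - specialize (IH ltac:(lia)). destruct (P (S k)) eqn:E.
      + specialize (HP (S k) ltac:(lia) E).
        replace (Nat.min (S k) b + 1 - a)%nat with (S (Nat.min k b + 1 - a)) by lia.
        rewrite S_INR. lra.
      + assert (v * INR (Nat.min k b + 1 - a) <= v * INR (Nat.min (S k) b + 1 - a))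
          by (apply Rmult_le_compat_l; [exact Hv| apply le_INR; lia]). lra. }
  eapply Rle_trans; [apply G; lia|].
  apply Rmult_le_compat_l; [exact Hv| apply le_INR; lia].
Qed.

(** * The boundary form *)

(* The quadratic boundary form with [(D^(2j+1) u, u) = (-1)^(j+1) (Phi_j(u(L)) - Phi_j(u(0)))],
   where [x i] stands for [D^i u] at the endpoint. *)
Definition Phi (x : nat -> R) (j : nat) : R :=
  - (x j * x j) / 2 + sum1 (fun t => (-1) ^ (t + 1) * (x (j + t)%nat * x (j - t)%nat)) j.

Definition alt_prod_sum (d : nat -> R -> R) (j n : nat) (y : R) : R :=
  sum1 (fun t => (-1) ^ t * (d (j + t)%nat y * d (j - t)%nat y)) n.

(* An antiderivative of [D^(2j+1) u * u], obtained by [j] integrations by parts. *)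
Definition antideriv (d : nat -> R -> R) (j : nat) (y : R) : R :=
  (-1) ^ j * (alt_prod_sum d j j y + d j y * d j y / 2).

Lemma pow_m1_even n : (-1) ^ (2 * n) = 1.
Proof. rewrite pow_mult. replace ((-1) ^ 2) with 1 by ring. apply pow1. Qed.

Lemma pow_m1_odd n : (-1) ^ (2 * n + 1) = -1.
Proof. rewrite pow_add, pow_m1_even. ring. Qed.

Section Derivatives.

Variables (L : R) (k : nat) (d : nat -> R -> R).
Hypothesis Hd : forall i y, (i < k)%nat -> 0 < y < L -> derivable_pt_lim (d i) y (d (S i) y).

(* The sum telescopes: the derivative keeps only its two extreme terms. *)
Lemma derivable_pt_lim_alt_prod_sum j n x : (n <= j)%nat -> (j + n < k)%nat -> 0 < x < L ->
  derivable_pt_lim (alt_prod_sum d j n) x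
    ((-1) ^ n * (d (j + n + 1)%nat x * d (j - n)%nat x) - d (j + 1)%nat x * d j x).
Proof.
  induction n as [|n IH]; intros Hn Hk Hx.
  - replace (j + 0 + 1)%nat with (j + 1)%nat by lia. rewrite Nat.sub_0_r.
    replace (_ - _) with 0 by ring. apply derivable_pt_lim_const.
  - set (f := fun y => d (j + S n)%nat y * d (j - S n)%nat y).
    apply (derivable_pt_lim_ext (fun y => alt_prod_sum d j n y + (-1) ^ S n * f y));
      [reflexivity|].
    replace ((-1) ^ S n * _ - _) with
      (((-1) ^ n * (d (j + n + 1)%nat x * d (j - n)%nat x) - d (j + 1)%nat x * d j x)
        + (-1) ^ S n * (d (S (j + S n)) x * d (j - S n)%nat x
                        + d (j + S n)%nat x * d (S (j - S n)) x)).
    2:{ replace (S (j - S n)) with (j - n)%nat by lia.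
        replace (S (j + S n)) with (j + S n + 1)%nat by lia.
        replace (j + n + 1)%nat with (j + S n)%nat by lia. simpl; ring. }
    apply derivable_pt_lim_plus; [apply IH; [lia|lia|exact Hx]|].
    apply (derivable_pt_lim_scal f).
    apply derivable_pt_lim_mult; apply Hd; [lia|exact Hx|lia|exact Hx].
Qed.

Lemma derivable_pt_lim_antideriv j x : (j + j < k)%nat -> 0 < x < L ->
  derivable_pt_lim (antideriv d j) x (d (2 * j + 1)%nat x * d 0%nat x).
Proof.
  intros Hk Hx.
  apply (derivable_pt_lim_ext (mult_real_fct ((-1) ^ j)
    (fun y => alt_prod_sum d j j y + mult_real_fct (/ 2) (fun y => d j y * d j y) y))).
  { intros y. unfold antideriv, mult_real_fct, Rdiv. ring. }
  replace (d (2 * j + 1)%nat x * d 0%nat x) with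
    ((-1) ^ j * (((-1) ^ j * (d (j + j + 1)%nat x * d (j - j)%nat x) - d (j + 1)%nat x * d j x)
       + / 2 * (d (S j) x * d j x + d j x * d (S j) x))).
  2:{ rewrite Nat.sub_diag. replace (j + j + 1)%nat with (2 * j + 1)%nat by lia.
      replace (S j) with (j + 1)%nat by lia.
      assert (Hsq : (-1) ^ j * (-1) ^ j = 1)
        by (rewrite <- pow_add, <- pow_m1_even with j; f_equal; lia).
      transitivity ((-1) ^ j * (-1) ^ j * (d (2 * j + 1)%nat x * d 0%nat x));
        [field| rewrite Hsq; ring]. }
  apply derivable_pt_lim_scal, derivable_pt_lim_plus.
  - apply derivable_pt_lim_alt_prod_sum; [lia|lia|exact Hx].
  - apply derivable_pt_lim_scal, derivable_pt_lim_mult; apply Hd; [lia|exact Hx|lia|exact Hx].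
Qed.

End Derivatives.

Lemma continuity_pt_antideriv_clamp d L k j x :
  (forall i, (i <= k)%nat -> continuity_pt (fun y => d i (clamp L y)) x) ->
  (j + j <= k)%nat ->
  continuity_pt (fun y => antideriv d j (clamp L y)) x.
Proof.
  intros Hc Hk.
  assert (HS : forall n, (n <= j)%nat -> continuity_pt (fun y => alt_prod_sum d j n (clamp L y)) x).
  { induction n as [|n IH]; intros Hn.
    - apply continuity_pt_const. intros ? ?; reflexivity.
    - apply continuity_pt_plus; [apply IH; lia|].
      apply (continuity_pt_scal (fun y => d (j + S n)%nat (clamp L y) * d (j - S n)%nat (clamp L y))).
      apply (continuity_pt_mult (fun y => d (j + S n)%nat (clamp L y))
                                (fun y => d (j - S n)%nat (clamp L y))); apply Hc; lia. }
  apply (continuity_pt_scal (fun y => alt_prod_sum d j j (clamp L y) +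
      d j (clamp L y) * d j (clamp L y) / 2)), continuity_pt_plus; [apply HS; lia|].
  apply (continuity_pt_mult (fun y => d j (clamp L y) * d j (clamp L y)) (fun _ => / 2)).
  - apply (continuity_pt_mult (fun y => d j (clamp L y)) (fun y => d j (clamp L y))); apply Hc; lia.
  - apply continuity_pt_const. intros ? ?; reflexivity.
Qed.

Lemma antideriv_Phi d j y : (-1) ^ (j + 1) * antideriv d j y = Phi (fun i => d i y) j.
Proof.
  unfold antideriv, Phi, alt_prod_sum.
  rewrite <- Rmult_assoc, <- pow_add.
  replace (j + 1 + j)%nat with (2 * j + 1)%nat by lia. rewrite pow_m1_odd.
  rewrite Rmult_plus_distr_l, <- sum1_scal.
  rewrite (sum1_ext _ (fun t => (-1) ^ (t + 1) * (d (j + t)%nat y * d (j - t)%nat y)))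
    by (intros; rewrite pow_add; ring).
  field.
Qed.

Lemma energy_identity l L d : 0 < L -> Ck_on (2 * l + 1) L d ->
  sum1 (fun j => (-1) ^ (j + 1) * ip L (d (2 * j + 1)%nat) (d 0%nat)) l =
  sum1 (Phi (fun i => d i L)) l - sum1 (Phi (fun i => d i 0)) l.
Proof.
  intros HL [Hc Hd].
  assert (Hcc : forall i x, (i <= 2 * l + 1)%nat -> continuity_pt (fun y => d i (clamp L y)) x)
    by (intros; apply continuity_pt_clamp; auto; lra).
  rewrite <- sum1_minus. apply sum1_ext. intros j Hj.
  rewrite <- !antideriv_Phi, <- Rmult_minus_distr_l. f_equal.
  apply RInt_FTC; [exact HL| | |].
  - intros x. apply (continuity_pt_mult (fun y => d (2 * j + 1)%nat (clamp L y))
                                        (fun y => d 0%nat (clamp L y))); apply Hcc; lia.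
  - intros x. apply (continuity_pt_antideriv_clamp d L (2 * l + 1)); [auto | lia].
  - intros x Hx. apply (derivable_pt_lim_antideriv L (2 * l + 1)); [exact Hd | lia | exact Hx].
Qed.

(** * Lower bound for the boundary form *)

Lemma Rabs_mult_le_amgm a b w : 0 < w -> Rabs (a * b) <= a * a / (2 * w) + w * (b * b) / 2.
Proof.
  intros Hw. rewrite Rabs_mult.
  assert (0 <= (Rabs a - w * Rabs b) * (Rabs a - w * Rabs b)) by apply Rle_0_sqr.
  assert (Rabs a * Rabs a = a * a) by (rewrite <- Rabs_mult; apply Rabs_pos_eq; nra).
  assert (Rabs b * Rabs b = b * b) by (rewrite <- Rabs_mult; apply Rabs_pos_eq; nra).
  apply Rmult_le_reg_l with (2 * w); [lra|]. field_simplify; [nra|lra].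
Qed.

(* The weight [|c| / (2 K)] is [0] when [K = 0] (since [/ 0 = 0]); then [c = 0] as well. *)
Lemma Rabs_mult3_le_amgm c K y z : 0 <= K -> Rabs c <= K ->
  Rabs (c * y * z) <= Rabs c / (2 * K) * (y * y) + Rabs c * K / 2 * (z * z).
Proof.
  intros HK Hc. destruct (Req_dec K 0) as [->|HK0].
  - replace c with 0 by (pose proof (Rabs_pos c); destruct (Req_dec c 0); auto;
      pose proof (Rabs_pos_lt c); lra).
    rewrite Rabs_R0. replace (0 * y * z) with 0 by ring. rewrite Rabs_R0. unfold Rdiv. lra.
  - rewrite Rmult_assoc, Rabs_mult.
    pose proof (Rabs_mult_le_amgm y z K ltac:(lra)).
    replace (Rabs c / (2 * K) * (y * y) + Rabs c * K / 2 * (z * z))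
      with (Rabs c * (y * y / (2 * K) + K * (z * z) / 2)) by (field; lra).
    apply Rmult_le_compat_l; [apply Rabs_pos | assumption].
Qed.

Lemma INR_half n m : (2 * n <= m)%nat -> INR n <= INR m / 2.
Proof. intros H. apply le_INR in H. rewrite mult_INR in H. simpl in H. lra. Qed.

Lemma div2_bounds (e : nat) : (2 * (e / 2) <= e <= 2 * (e / 2) + 1)%nat.
Proof. pose proof (Nat.div_mod_eq e 2). pose proof (Nat.mod_upper_bound e 2). lia. Qed.

Ltac destruct_nat_tests := repeat match goal with
  | |- context [Nat.eqb ?a ?b] => destruct (Nat.eqb_spec a b)
  | |- context [Nat.ltb ?a ?b] => destruct (Nat.ltb_spec a b)
  | |- context [Nat.leb ?a ?b] => destruct (Nat.leb_spec a b)
  end; simpl andb in *; cbv iota in *.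

Definition ind (b : bool) : R := if b then 1 else 0.
Definition kron (i p : nat) : R := ind (i =? p)%nat.

Lemma sum1_kron (y : nat -> R) p n : (1 <= p <= n)%nat -> sum1 (fun i => kron i p * y i) n = y p.
Proof.
  intros H. rewrite (sum1_ext _ (fun i => if (i =? p)%nat then y i else 0)).
  - rewrite sum1_delta. destruct (Nat.leb_spec 1 p), (Nat.leb_spec p n); simpl; auto; lia.
  - intros i _. unfold kron, ind. destruct (i =? p)%nat; ring.
Qed.

Definition dsum (f : nat -> nat -> R) (n : nat) : R := sum1 (fun j => sum1 (f j) n) n.

Lemma dsum_ext f g n : (forall j t, (1 <= j <= n)%nat -> (1 <= t <= n)%nat -> f j t = g j t) ->
  dsum f n = dsum g n.
Proof. intros H; apply sum1_ext; intros; apply sum1_ext; intros; auto. Qed.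

Lemma dsum_plus f g n : dsum (fun j t => f j t + g j t) n = dsum f n + dsum g n.
Proof. unfold dsum. rewrite <- sum1_plus. apply sum1_ext; intros. apply sum1_plus. Qed.

Lemma dsum_scal a f n : dsum (fun j t => a * f j t) n = a * dsum f n.
Proof. unfold dsum. rewrite <- sum1_scal. apply sum1_ext; intros. apply sum1_scal. Qed.

Lemma dsum_opp f n : dsum f n = - dsum (fun j t => - f j t) n.
Proof.
  rewrite (dsum_ext (fun j t => - f j t) (fun j t => -1 * f j t)) by (intros; ring).
  rewrite dsum_scal. ring.
Qed.

Lemma dsum_0 f n : (forall j t, (1 <= j <= n)%nat -> (1 <= t <= n)%nat -> f j t = 0) ->
  dsum f n = 0.
Proof.
  intros H. rewrite (dsum_ext _ (fun _ _ => 0 * 0)) by (intros; rewrite H; auto; ring).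
  rewrite dsum_scal. ring.
Qed.

Definition tau (x : nat -> R) (j t : nat) : R := (-1) ^ (t + 1) * (x (j + t)%nat * x (j - t)%nat).

Lemma sum1_Phi (x : nat -> R) n :
  sum1 (Phi x) n = - sum1 (fun i => x i * x i) n / 2 + sum1 (fun j => sum1 (tau x j) j) n.
Proof.
  unfold Phi. rewrite sum1_plus. f_equal.
  transitivity (- / 2 * sum1 (fun i => x i * x i) n); [|field].
  rewrite <- sum1_scal; apply sum1_ext; intros; field.
Qed.

(* [par_sum c l q] sums [|c m|] over [1 <= m < l - q] with [m = l - q (mod 2)]: the
   partial sums appearing in the Coefficient Conditions for [j = l - q]. *)
Definition par_sum (c : nat -> R) (l q : nat) : R :=
  if Nat.odd (l - q) then sum1 (fun k => Rabs (c (2 * k - 1)%nat)) ((l - q - 1) / 2)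
  else sum1 (fun k => Rabs (c (2 * k)%nat)) ((l - q) / 2 - 1).

Lemma par_sum_ge0 c l q : 0 <= par_sum c l q.
Proof. unfold par_sum; destruct (Nat.odd _); apply sum1_nonneg; intros; apply Rabs_pos. Qed.

Section QuadraticForm.

Variables (l : nat) (c : nat -> R) (mu s : R).

Definition is_diag (j t : nat) : bool := (j =? l)%nat && (t <? l)%nat.
Definition is_inner (j t : nat) : bool := (j <? l)%nat && (t <? j)%nat && (j + t <=? l)%nat.
Definition is_reflected (j t : nat) : bool := (j <? l)%nat && (t <? j)%nat && (l <? j + t)%nat.

Ltac decide_group := unfold is_diag, is_inner, is_reflected; destruct_nat_tests;
  try reflexivity; lia.

Lemma Rabs_c_le_par_sum j t : is_reflected j t = true ->
  Rabs (c (j + t - l)%nat) <= par_sum c l (j - t).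
Proof.
  intros Hr. assert (H : (j < l /\ t < j /\ l < j + t)%nat).
  { revert Hr; unfold is_reflected; destruct_nat_tests; easy || lia. }
  unfold par_sum. destruct (Nat.Even_or_Odd (j + t - l)) as [[p Hp]|[p Hp]].
  - replace (l - (j - t))%nat with (2 * (p + l - j))%nat by lia. rewrite Nat.odd_even.
    replace (2 * (p + l - j) / 2 - 1)%nat with (p + l - j - 1)%nat
      by (pose proof (div2_bounds (2 * (p + l - j))); lia).
    rewrite Hp. apply (sum1_term_le (fun k => Rabs (c (2 * k)%nat))); [intros; apply Rabs_pos|lia].
  - replace (l - (j - t))%nat with (2 * (p + l - j) + 1)%nat by lia. rewrite Nat.odd_odd.
    replace ((2 * (p + l - j) + 1 - 1) / 2)%nat with (p + l - j)%nat
      by (pose proof (div2_bounds (2 * (p + l - j) + 1 - 1)); lia).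
    rewrite Hp. replace (2 * p + 1)%nat with (2 * (p + 1) - 1)%nat by lia.
    apply (sum1_term_le (fun k => Rabs (c (2 * k - 1)%nat))); [intros; apply Rabs_pos|lia].
Qed.

(* Along the diagonal [j - t = i] the reflected pairs use each [c m] of the right
   parity exactly once. *)
Lemma dsum_reflected_le_par_sum i : (1 <= i <= l - 1)%nat ->
  dsum (fun j t => ind (is_reflected j t) * Rabs (c (j + t - l)%nat) * kron i (j - t)) l
  <= par_sum c l i.
Proof.
  intros Hi. unfold dsum.
  rewrite (sum1_ext _ (fun j => if ((i <? j) && (j <? l) && (l + i <? 2 * j))%bool
                                then Rabs (c (2 * j - i - l)%nat) else 0)).
  2:{ intros j Hj.
      rewrite (sum1_ext _ (fun t => if (t =? j - i)%nat then
          (if ((i <? j) && (j <? l) && (l + i <? 2 * j))%bool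
           then Rabs (c (2 * j - i - l)%nat) else 0) else 0)).
      - rewrite sum1_delta. destruct_nat_tests; try lia; reflexivity.
      - intros t Ht. unfold is_reflected, kron, ind.
        destruct (Nat.eqb_spec t (j - i)) as [->|Ne].
        + replace (j + (j - i) - l)%nat with (2 * j - i - l)%nat by lia.
          destruct_nat_tests; try lia; ring.
        + destruct_nat_tests; try lia; ring. }
  right. unfold par_sum.
  destruct (Nat.Even_or_Odd (l - i)) as [[p Hp]|[p Hp]].
  - rewrite Hp, Nat.odd_even.
    replace (2 * p / 2 - 1)%nat with (p - 1)%nat by (pose proof (div2_bounds (2 * p)); lia).
    rewrite <- (sum1_shift (fun k => Rabs (c (2 * k)%nat)) (i + p) (p - 1) l) by lia.
    apply sum1_ext. intros j Hj.
    destruct_nat_tests; try lia; try reflexivity. f_equal. f_equal. lia.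
  - rewrite Hp, Nat.odd_odd.
    replace ((2 * p + 1 - 1) / 2)%nat with p by (pose proof (div2_bounds (2 * p + 1 - 1)); lia).
    rewrite <- (sum1_shift (fun k => Rabs (c (2 * k - 1)%nat)) (i + p) p l) by lia.
    apply sum1_ext. intros j Hj.
    destruct_nat_tests; try lia; try reflexivity. f_equal. f_equal. lia.
Qed.

Local Notation K := (par_sum c l).

Hypothesis Hl : (1 <= l)%nat.
Hypothesis Hmu : 1 <= mu.
Hypothesis Hs : s = 1 \/ s = -1.

Definition w_out (p : nat) : R := if (p =? l)%nat then / (2 * mu) else / 2.
Definition w_in (p : nat) : R := / 2 + ind (p =? l)%nat * ((mu - 1) / 2).

Definition coef_diag j t := ind (is_diag j t) * (s * (-1) ^ (t + 1) * c t).
Definition coef_inner_out j t := - ind (is_inner j t) * w_out (j + t).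
Definition coef_inner_in j t := - ind (is_inner j t) * w_in (j + t).
Definition coef_refl_out j t :=
  - ind (is_reflected j t) * (Rabs (c (j + t - l)%nat) / (2 * K (j - t)%nat)).
Definition coef_refl_in j t :=
  - ind (is_reflected j t) * (Rabs (c (j + t - l)%nat) * K (j - t)%nat / 2).

(* [weight j t i] is the coefficient of [x i ^ 2] in a lower bound for [s * tau x j t]:
   exact on the diagonal [j = l], where [x (l + t) = c t * x (l - t)], and by AM-GM
   off it.  For [j + t = l] the AM-GM split [1/(2 mu), mu/2] spares [x l]. *)
Definition weight j t i :=
  coef_diag j t * kron i (l - t) + coef_inner_out j t * kron i (j + t)
  + coef_inner_in j t * kron i (j - t) + coef_refl_out j t * kron i (2 * l - (j + t))
  + coef_refl_in j t * kron i (j - t).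

Definition total_weight i := dsum (fun j t => weight j t i) l.

Section Pointwise.

Variable x : nat -> R.
Hypothesis Hx0 : x 0%nat = 0.
Hypothesis Hxc : forall m, (1 <= m <= l - 1)%nat -> x (l + m)%nat = c m * x (l - m)%nat.

Lemma sum1_weight_le j t : (1 <= j <= l)%nat -> (1 <= t <= l)%nat ->
  sum1 (fun i => weight j t i * (x i * x i)) l <= if (t <=? j)%nat then s * tau x j t else 0.
Proof.
  intros Hj Ht.
  assert (Habs : forall r, - Rabs r <= s * r)
    by (intros r; destruct Hs as [-> | ->]; pose proof (Rle_abs r);
        pose proof (Rle_abs (- r)); rewrite Rabs_Ropp in *; lra).
  rewrite (sum1_ext _ (fun i =>
      coef_diag j t * (kron i (l - t) * (x i * x i))
    + coef_inner_out j t * (kron i (j + t) * (x i * x i))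
    + coef_inner_in j t * (kron i (j - t) * (x i * x i))
    + coef_refl_out j t * (kron i (2 * l - (j + t)) * (x i * x i))
    + coef_refl_in j t * (kron i (j - t) * (x i * x i)))) by (intros; unfold weight; ring).
  rewrite !sum1_plus, !sum1_scal.
  unfold coef_diag, coef_inner_out, coef_inner_in, coef_refl_out, coef_refl_in, tau.
  destruct (is_diag j t) eqn:Ed; destruct (is_inner j t) eqn:Ei;
    destruct (is_reflected j t) eqn:Er; revert Ed Ei Er; try decide_group;
    unfold is_diag, is_inner, is_reflected, ind; destruct_nat_tests; try easy; intros _ _ _;
    try lia; rewrite ?Ropp_0, ?Rmult_0_l, ?Rplus_0_r, ?Rplus_0_l, ?Rmult_1_l.
  (* outside the three groups, t >= j and the term vanishes since x 0 = 0 *)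
  all: try (replace t with j by lia; rewrite Nat.sub_diag, Hx0; lra); try lra.
  -     subst j. rewrite sum1_kron, Hxc by lia. replace (l - (l - t))%nat with t by lia.
    right; ring.
  -     rewrite !sum1_kron by lia. eapply Rle_trans; [|apply Habs].
    rewrite Rabs_mult, pow_1_abs, Rmult_1_l.
    unfold w_out, w_in, ind; destruct (Nat.eqb_spec (j + t) l).
    + pose proof (Rabs_mult_le_amgm (x (j + t)%nat) (x (j - t)%nat) mu ltac:(lra)).
      replace (/ 2 + 1 * ((mu - 1) / 2)) with (mu / 2) by field. unfold Rdiv in *. lra.
    + pose proof (Rabs_mult_le_amgm (x (j + t)%nat) (x (j - t)%nat) 1 ltac:(lra)).
      replace (/ 2 + 0 * ((mu - 1) / 2)) with (/ 2) by field. unfold Rdiv in *. lra.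
  - (* reflected pair: x (j + t) = c m * x (2 l - (j + t)) *)
    rewrite !sum1_kron by lia.
    replace (x (j + t)%nat) with (c (j + t - l)%nat * x (2 * l - (j + t))%nat)
      by (replace (2 * l - (j + t))%nat with (l - (j + t - l))%nat by lia;
          rewrite <- Hxc by lia; f_equal; lia).
    eapply Rle_trans; [|apply Habs].
    rewrite Rabs_mult, pow_1_abs, Rmult_1_l.
    assert (Hr : is_reflected j t = true) by decide_group.
    eapply Rle_trans; [|apply Ropp_le_contravar, Rabs_mult3_le_amgm;
      [apply par_sum_ge0 | apply Rabs_c_le_par_sum, Hr]].
    right; ring.
Qed.

Lemma sum1_total_weight_le :
  sum1 (fun i => (x i * x i) * total_weight i) l <= s * sum1 (fun j => sum1 (tau x j) j) l.
Proof.
  rewrite <- sum1_scal.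
  rewrite (sum1_ext (fun j => s * sum1 (tau x j) j)
    (fun j => sum1 (fun t => if (t <=? j)%nat then s * tau x j t else 0) l)).
  2:{ intros j Hj. rewrite <- sum1_scal, (sum1_widen _ j l) by lia.
      apply sum1_ext; intros t Ht. destruct (t <=? j)%nat; ring. }
  eapply Rle_trans; [|apply sum1_le; intros j Hj; apply sum1_le; intros t Ht;
    apply sum1_weight_le; assumption].
  rewrite (sum1_ext (fun j => sum1 (fun t => sum1 (fun i => weight j t i * (x i * x i)) l) l)
    (fun j => sum1 (fun i => sum1 (fun t => weight j t i * (x i * x i)) l) l))
    by (intros; apply sum1_comm).
  rewrite sum1_comm. right. apply sum1_ext. intros i Hi. unfold total_weight, dsum.
  rewrite <- sum1_scal. apply sum1_ext. intros j Hj. rewrite <- sum1_scal.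
  apply sum1_ext. intros; ring.
Qed.

End Pointwise.

Lemma total_weight_split i : total_weight i =
  dsum (fun j t => coef_diag j t * kron i (l - t)) l
  + dsum (fun j t => coef_inner_out j t * kron i (j + t)) l
  + dsum (fun j t => coef_inner_in j t * kron i (j - t)) l
  + dsum (fun j t => coef_refl_out j t * kron i (2 * l - (j + t))) l
  + dsum (fun j t => coef_refl_in j t * kron i (j - t)) l.
Proof. unfold total_weight. rewrite <- !dsum_plus. reflexivity. Qed.

Lemma dsum_diag i : (1 <= i <= l - 1)%nat ->
  dsum (fun j t => coef_diag j t * kron i (l - t)) l = s * (-1) ^ (l - i + 1) * c (l - i)%nat.
Proof.
  intros Hi. unfold dsum.
  rewrite (sum1_ext _ (fun j => if (j =? l)%nat then s * (-1) ^ (l - i + 1) * c (l - i)%nat else 0)).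
  - rewrite sum1_delta. destruct (Nat.leb_spec 1 l), (Nat.leb_spec l l); simpl; auto; lia.
  - intros j Hj.
    rewrite (sum1_ext _ (fun t => if (t =? l - i)%nat
      then (if (j =? l)%nat then s * (-1) ^ (t + 1) * c t else 0) else 0)).
    + rewrite sum1_delta. destruct (Nat.leb_spec 1 (l - i)), (Nat.leb_spec (l - i) l);
        simpl; try lia. reflexivity.
    + intros t Ht. unfold coef_diag, is_diag, kron, ind. destruct_nat_tests; try lia; ring.
Qed.

Lemma dsum_inner_out_le i : (1 <= i <= l)%nat ->
  dsum (fun j t => - (coef_inner_out j t * kron i (j + t))) l <= w_out i * ((INR i - 1) / 2).
Proof.
  intros Hi.
  assert (Hw : 0 <= w_out i)
    by (unfold w_out; destruct (_ =? _)%nat; apply Rlt_le, Rinv_0_lt_compat; lra).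
  pose proof (div2_bounds i).
  eapply Rle_trans.
  - apply (sum1_sum1_count _ (fun j => i - j)%nat
      (fun j => ((i / 2 + 1 <=? j) && (j <=? i - 1))%bool) l l (i / 2 + 1) (i - 1) (w_out i));
      [exact Hw| |].
    + intros j t Hj Ht. unfold coef_inner_out, is_inner, kron, ind.
      destruct (Nat.eqb_spec i (j + t)) as [E|E].
      * subst i. destruct_nat_tests; try lia; ring_simplify; lra.
      * destruct_nat_tests; try lia; ring_simplify; lra.
    + intros j Hj HP. apply andb_prop in HP as [H1 H2]. apply Nat.leb_le in H1, H2. lia.
  - apply Rmult_le_compat_l; [exact Hw|].
    replace (INR i - 1) with (INR (i - 1)) by (rewrite minus_INR by lia; reflexivity).
    apply INR_half. lia.
Qed.

Lemma dsum_inner_in_le i : (1 <= i <= l)%nat ->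
  dsum (fun j t => - (coef_inner_in j t * kron i (j - t))) l
  <= / 2 * ((INR l - INR i) / 2) + (mu - 1) / 2.
Proof.
  intros Hi. pose proof (div2_bounds (l + i)).
  rewrite (dsum_ext _ (fun j t => ind (is_inner j t) * / 2 * kron i (j - t) +
      ind (is_inner j t) * ind (j + t =? l)%nat * ((mu - 1) / 2) * kron i (j - t)))
    by (intros; unfold coef_inner_in, w_in; ring).
  rewrite dsum_plus. apply Rplus_le_compat.
  - eapply Rle_trans.
    + apply (sum1_sum1_count _ (fun j => j - i)%nat
        (fun j => ((i + 1 <=? j) && (2 * j <=? l + i))%bool) l l (i + 1) ((l + i) / 2) (/ 2));
        [lra| |].
      * intros j t Hj Ht. unfold is_inner, kron, ind.
        destruct (Nat.eqb_spec i (j - t)); destruct_nat_tests; try lia; lra.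
      * intros j Hj HP. apply andb_prop in HP as [H1 H2]. apply Nat.leb_le in H1, H2. lia.
    + apply Rmult_le_compat_l; [lra|]. rewrite <- minus_INR by lia. apply INR_half. lia.
  - eapply Rle_trans.
    + apply (sum1_sum1_count _ (fun j => j - i)%nat (fun j => (2 * j =? l + i)%nat) l l
        ((l + i) / 2) ((l + i) / 2) ((mu - 1) / 2)); [lra| |].
      * intros j t Hj Ht. unfold is_inner, kron, ind.
        destruct (Nat.eqb_spec i (j - t)); destruct_nat_tests; try lia; lra.
      * intros j Hj HP. apply Nat.eqb_eq in HP. lia.
    + replace ((l + i) / 2 + 1 - (l + i) / 2)%nat with 1%nat by lia. simpl. lra.
Qed.

Lemma dsum_refl_out_le i : (1 <= i <= l)%nat ->
  dsum (fun j t => - (coef_refl_out j t * kron i (2 * l - (j + t)))) l <= / 2 * ((INR i - 1) / 2).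
Proof.
  intros Hi. pose proof (div2_bounds (2 * l - i)).
  assert (Hq : forall j t, is_reflected j t = true ->
    Rabs (c (j + t - l)%nat) / (2 * K (j - t)%nat) <= / 2).
  { intros j t Hr. pose proof (Rabs_c_le_par_sum j t Hr). pose proof (par_sum_ge0 c l (j - t)).
    pose proof (Rabs_pos (c (j + t - l)%nat)).
    destruct (Req_dec (K (j - t)%nat) 0) as [E|E].
    - rewrite E, Rmult_0_r. unfold Rdiv. rewrite Rinv_0. lra.
    - apply (Rmult_le_reg_r (2 * K (j - t)%nat)); [lra|]. unfold Rdiv.
      rewrite Rmult_assoc, Rinv_l by lra. lra. }
  eapply Rle_trans.
  - apply (sum1_sum1_count _ (fun j => 2 * l - i - j)%nat
      (fun j => (((2 * l - i) / 2 + 1 <=? j) && (j <=? l - 1))%bool) l l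
      ((2 * l - i) / 2 + 1) (l - 1) (/ 2)); [lra| |].
    + intros j t Hj Ht. unfold coef_refl_out.
      destruct (is_reflected j t) eqn:Er.
      * specialize (Hq j t Er). revert Er. unfold is_reflected, kron, ind.
        destruct (Nat.eqb_spec i (2 * l - (j + t))); destruct_nat_tests; try easy; try lia;
          intros _; ring_simplify; lra.
      * unfold ind. ring_simplify. destruct (_ && _)%bool; lra.
    + intros j Hj HP. apply andb_prop in HP as [H1 H2]. apply Nat.leb_le in H1, H2. lia.
  - apply Rmult_le_compat_l; [lra|].
    replace (INR i - 1) with (INR (i - 1)) by (rewrite minus_INR by lia; reflexivity).
    apply INR_half. lia.
Qed.

Lemma dsum_refl_in i :
  dsum (fun j t => - (coef_refl_in j t * kron i (j - t))) l =
  K i / 2 * dsum (fun j t => ind (is_reflected j t) * Rabs (c (j + t - l)%nat) * kron i (j - t)) l.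
Proof.
  rewrite <- dsum_scal. apply dsum_ext. intros j t _ _. unfold coef_refl_in, kron, ind.
  destruct (Nat.eqb_spec i (j - t)) as [->|E]; cbv iota; field.
Qed.

Lemma total_weight_mid i : (1 <= i <= l - 1)%nat ->
  s * (-1) ^ (l - i + 1) * c (l - i)%nat - K i * K i / 2
    - (INR i - 1) / 2 - (INR l - INR i) / 4 - (mu - 1) / 2 <= total_weight i.
Proof.
  intros Hi.
  rewrite total_weight_split, dsum_diag by lia.
  rewrite (dsum_opp (fun j t => coef_inner_out j t * kron i (j + t))).
  rewrite (dsum_opp (fun j t => coef_inner_in j t * kron i (j - t))).
  rewrite (dsum_opp (fun j t => coef_refl_out j t * kron i (2 * l - (j + t)))).
  rewrite (dsum_opp (fun j t => coef_refl_in j t * kron i (j - t))), dsum_refl_in.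
  pose proof (dsum_inner_out_le i ltac:(lia)) as Hout.
  replace (w_out i) with (/ 2) in Hout by (unfold w_out; destruct (Nat.eqb_spec i l); [lia|auto]).
  pose proof (dsum_inner_in_le i ltac:(lia)) as Hin.
  pose proof (dsum_refl_out_le i ltac:(lia)) as Hrefl.
  pose proof (dsum_reflected_le_par_sum i Hi) as Hsum.
  pose proof (par_sum_ge0 c l i).
  assert (K i / 2 * dsum (fun j t => ind (is_reflected j t) * Rabs (c (j + t - l)%nat)
    * kron i (j - t)) l <= K i * K i / 2)
    by (apply (Rmult_le_compat_l (K i / 2)) in Hsum; lra).
  lra.
Qed.

(* Only the inner pairs with [j + t = l] put weight on [x l]. *)
Lemma total_weight_top : - / (2 * mu) * ((INR l - 1) / 2) <= total_weight l.
Proof.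
  rewrite total_weight_split.
  rewrite (dsum_0 (fun j t => coef_diag j t * kron l (l - t)))
    by (intros j t Hj Ht; unfold coef_diag, is_diag, kron, ind; destruct_nat_tests; try lia; ring).
  rewrite (dsum_0 (fun j t => coef_inner_in j t * kron l (j - t)))
    by (intros j t Hj Ht; unfold coef_inner_in, is_inner, kron, ind; destruct_nat_tests; try lia; ring).
  rewrite (dsum_0 (fun j t => coef_refl_out j t * kron l (2 * l - (j + t))))
    by (intros j t Hj Ht; unfold coef_refl_out, is_reflected, kron, ind; destruct_nat_tests;
        try lia; ring).
  rewrite (dsum_0 (fun j t => coef_refl_in j t * kron l (j - t)))
    by (intros j t Hj Ht; unfold coef_refl_in, is_reflected, kron, ind; destruct_nat_tests;
        try lia; ring).
  rewrite (dsum_opp (fun j t => coef_inner_out j t * kron l (j + t))).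
  pose proof (dsum_inner_out_le l ltac:(lia)) as Hout.
  replace (w_out l) with (/ (2 * mu)) in Hout by (unfold w_out; rewrite Nat.eqb_refl; auto).
  lra.
Qed.

Lemma s_sum1_Phi_ge (x : nat -> R) : x 0%nat = 0 ->
  (forall m, (1 <= m <= l - 1)%nat -> x (l + m)%nat = c m * x (l - m)%nat) ->
  (forall i, (1 <= i <= l - 1)%nat ->
     s * (-1) ^ (l - i + 1) * c (l - i)%nat - K i * K i / 2
     >= 1 / 4 + s / 2 + (INR i - 1) / 2 + (INR l - INR i) / 4 + (mu - 1) / 2) ->
  (- s / 2 - / (2 * mu) * ((INR l - 1) / 2) >= 1 / 4 \/ x l = 0) ->
  s * sum1 (Phi x) l >= 1 / 4 * sum1 (fun i => x i * x i) l.
Proof.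
  intros Hx0 Hxc Hmid Htop.
  rewrite sum1_Phi, Rmult_plus_distr_l.
  pose proof (sum1_total_weight_le x Hx0 Hxc) as Hquad.
  replace (s * (- sum1 (fun i => x i * x i) l / 2))
    with (sum1 (fun i => - s / 2 * (x i * x i)) l) by (rewrite sum1_scal; field).
  apply Rle_ge. eapply Rle_trans; [|apply Rplus_le_compat_l, Hquad].
  rewrite <- sum1_scal, <- sum1_plus.
  apply sum1_le. intros i Hi.
  assert (0 <= x i * x i) by apply Rle_0_sqr.
  destruct (Nat.eq_dec i l) as [->|Hil].
  - destruct Htop as [Htop|Hxl]; [|rewrite Hxl; lra].
    pose proof total_weight_top. nra.
  - pose proof (total_weight_mid i ltac:(lia)). specialize (Hmid i ltac:(lia)). nra.
Qed.

End QuadraticForm.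

(** * The Coefficient Conditions *)

(* [s] is the sign of the endpoint: [1] at [L] (with [bb = b]), [-1] at [0] (with [bb = a]). *)
Lemma coef_cond_diag l (c : nat -> R) (bb : nat -> nat -> R) s D :
  (4 <= l)%nat ->
  (forall m, c m = bb (l + m)%nat (l - m)%nat) ->
  s * c 1%nat > D ->
  - s * c 2%nat > D ->
  (forall j, (3 <= j <= l - 1)%nat -> Nat.odd j = true ->
     s * bb (l + j)%nat (l - j)%nat > D + 1 / 2 *
       (sum1 (fun m => Rabs (bb (l + 2 * m - 1)%nat (l - 2 * m + 1)%nat)) ((j - 1) / 2)) ^ 2) ->
  (forall j, (4 <= j <= l - 1)%nat -> Nat.even j = true ->
     - s * bb (l + j)%nat (l - j)%nat > D + 1 / 2 *
       (sum1 (fun m => Rabs (bb (l + 2 * m)%nat (l - 2 * m)%nat)) (j / 2 - 1)) ^ 2) ->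
  forall i, (1 <= i <= l - 1)%nat ->
    s * (-1) ^ (l - i + 1) * c (l - i)%nat > D + par_sum c l i * par_sum c l i / 2.
Proof.
  intros Hl Hc H1 H2 Hodd Heven i Hi. unfold par_sum.
  destruct (Nat.Even_or_Odd (l - i)) as [[p Hp]|[p Hp]].
  - rewrite Hp, Nat.odd_even, pow_m1_odd.
    replace (2 * p / 2 - 1)%nat with (p - 1)%nat by (pose proof (div2_bounds (2 * p)); lia).
    destruct (Nat.eq_dec p 1) as [->|Hp1]; [simpl sum1; replace (2 * 1)%nat with 2%nat by lia; lra|].
    specialize (Heven (2 * p)%nat ltac:(lia) (Nat.even_even p)).
    replace (2 * p / 2 - 1)%nat with (p - 1)%nat in Heven
      by (pose proof (div2_bounds (2 * p)); lia).
    rewrite (sum1_ext (fun k => Rabs (c (2 * k)%nat))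
      (fun m => Rabs (bb (l + 2 * m)%nat (l - 2 * m)%nat))) by (intros; rewrite Hc; reflexivity).
    rewrite Hc. set (S := sum1 _ (p - 1)) in *. replace (S ^ 2) with (S * S) in Heven by ring.
    lra.
  - rewrite Hp, Nat.odd_odd. replace (2 * p + 1 + 1)%nat with (2 * (p + 1))%nat by lia.
    rewrite pow_m1_even.
    replace ((2 * p + 1 - 1) / 2)%nat with p by (pose proof (div2_bounds (2 * p + 1 - 1)); lia).
    destruct (Nat.eq_dec p 0) as [->|Hp0]; [simpl sum1; replace (2 * 0 + 1)%nat with 1%nat by lia; lra|].
    specialize (Hodd (2 * p + 1)%nat ltac:(lia) (Nat.odd_odd p)).
    replace ((2 * p + 1 - 1) / 2)%nat with p in Hodd
      by (pose proof (div2_bounds (2 * p + 1 - 1)); lia).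
    rewrite (sum1_ext (fun k => Rabs (c (2 * k - 1)%nat))
      (fun m => Rabs (bb (l + 2 * m - 1)%nat (l - 2 * m + 1)%nat)))
      by (intros; rewrite Hc; f_equal; f_equal; lia).
    rewrite Hc. set (S := sum1 _ p) in *. replace (S ^ 2) with (S * S) in Hodd by ring.
    lra.
Qed.

Definition endpoint_BC (l : nat) (a b : nat -> nat -> R) (xL x0 : nat -> R) : Prop :=
  xL 0%nat = 0 /\ x0 0%nat = 0 /\ xL l = 0 /\
  (forall j, (1 <= j <= l - 1)%nat ->
     x0 (l + j)%nat = a (l + j)%nat (l - j)%nat * x0 (l - j)%nat /\
     xL (l + j)%nat = b (l + j)%nat (l - j)%nat * xL (l - j)%nat).

Lemma boundary_form_ge_l4 l a b xL x0 : (4 <= l)%nat -> CoefCond l a b ->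
  endpoint_BC l a b xL x0 ->
  sum1 (Phi xL) l - sum1 (Phi x0) l >=
    1 / 4 * (sum1 (fun i => xL i ^ 2 + x0 i ^ 2) (l - 1) + x0 l ^ 2).
Proof.
  intros Hl [_ [_ C4]] [HL0 [H00 [HLl HBC]]].
  destruct (C4 Hl) as [Hb1 [Hb2 [Ha1 [Ha2 [Hodd Heven]]]]].
  set (cb := fun m => b (l + m)%nat (l - m)%nat). set (ca := fun m => a (l + m)%nat (l - m)%nat).
  assert (HlR : 4 <= INR l) by (replace 4 with (INR 4) by (simpl; ring); apply le_INR, Hl).
  assert (Hrange : forall i, (1 <= i <= l - 1)%nat -> 1 <= INR i <= INR l - 1).
  { intros i Hi. replace (INR l - 1) with (INR (l - 1)) by (rewrite minus_INR by lia; reflexivity).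
    replace 1 with (INR 1) by reflexivity. split; apply le_INR; lia. }
  assert (EL : 1 * sum1 (Phi xL) l >= 1 / 4 * sum1 (fun i => xL i * xL i) l).
  { apply (s_sum1_Phi_ge l cb 1 1 ltac:(lia) ltac:(lra) ltac:(lra) xL HL0
      (fun m Hm => proj2 (HBC m Hm))); [|right; exact HLl].
    intros i Hi. pose proof (Hrange i Hi).
    enough (1 * (-1) ^ (l - i + 1) * cb (l - i)%nat >
      INR l - 2 + par_sum cb l i * par_sum cb l i / 2) by lra.
    refine (coef_cond_diag l cb b 1 (INR l - 2) Hl (fun m => eq_refl) _ _ _ _ i Hi);
      unfold cb; try lra; intros j Hj Hp; [specialize (Hodd j Hj Hp) | specialize (Heven j Hj Hp)];
      lra. }
  assert (E0 : -1 * sum1 (Phi x0) l >= 1 / 4 * sum1 (fun i => x0 i * x0 i) l).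
  { apply (s_sum1_Phi_ge l ca (INR l) (-1) ltac:(lia) ltac:(lra) ltac:(lra) x0 H00
      (fun m Hm => proj1 (HBC m Hm))); [|left].
    - intros i Hi. pose proof (Hrange i Hi).
      enough (-1 * (-1) ^ (l - i + 1) * ca (l - i)%nat >
        2 * INR l - 5 + par_sum ca l i * par_sum ca l i / 2) by lra.
      refine (coef_cond_diag l ca a (-1) (2 * INR l - 5) Hl (fun m => eq_refl) _ _ _ _ i Hi);
        unfold ca; try lra; intros j Hj Hp;
        [specialize (Hodd j Hj Hp) | specialize (Heven j Hj Hp)]; lra.
    - replace (/ (2 * INR l) * ((INR l - 1) / 2)) with (1 / 4 - / (4 * INR l)) by (field; lra).
      assert (0 < / (4 * INR l)) by (apply Rinv_0_lt_compat; lra). lra. }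
  rewrite (sum1_last (fun i => xL i * xL i)), HLl in EL by lia.
  rewrite (sum1_last (fun i => x0 i * x0 i)) in E0 by lia.
  rewrite sum1_plus, (sum1_ext (fun i => xL i ^ 2) (fun i => xL i * xL i)),
    (sum1_ext (fun i => x0 i ^ 2) (fun i => x0 i * x0 i)) by (intros; ring).
  lra.
Qed.

Lemma boundary_form_ge_l2 a b xL x0 M : 0 <= M ->
  M <= b 3%nat 1%nat - 1 / 2 -> M <= 1 / 2 - a 3%nat 1%nat -> M <= 1 / 2 ->
  endpoint_BC 2 a b xL x0 ->
  sum1 (Phi xL) 2 - sum1 (Phi x0) 2 >= M * (sum1 (fun i => xL i ^ 2 + x0 i ^ 2) 1 + x0 2%nat ^ 2).
Proof.
  intros HM Hb Ha Hhalf [HL0 [H00 [HLl HBC]]].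
  destruct (HBC 1%nat ltac:(lia)) as [E0 EL]. simpl in E0, EL.
  unfold Phi. simpl. rewrite HL0, H00, HLl, E0, EL.
  assert (0 <= (b 3%nat 1%nat - 1 / 2 - M) * (xL 1%nat * xL 1%nat))
    by (apply Rmult_le_pos; [lra | apply Rle_0_sqr]).
  assert (0 <= (1 / 2 - a 3%nat 1%nat - M) * (x0 1%nat * x0 1%nat))
    by (apply Rmult_le_pos; [lra | apply Rle_0_sqr]).
  assert (0 <= (1 / 2 - M) * (x0 2%nat * x0 2%nat))
    by (apply Rmult_le_pos; [lra | apply Rle_0_sqr]).
  nra.
Qed.

Lemma boundary_form_ge_l3 a b xL x0 M : 0 <= M ->
  M <= - (1 / 2) - b 5%nat 1%nat -> M <= b 4%nat 2%nat - 1 / 2 ->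
  M <= a 5%nat 1%nat - 1 / 2 -> M <= 1 / 2 - a 4%nat 2%nat -> M <= 1 / 4 ->
  endpoint_BC 3 a b xL x0 ->
  sum1 (Phi xL) 3 - sum1 (Phi x0) 3 >= M * (sum1 (fun i => xL i ^ 2 + x0 i ^ 2) 2 + x0 3%nat ^ 2).
Proof.
  intros HM Hb51 Hb42 Ha51 Ha42 Hquarter [HL0 [H00 [HLl HBC]]].
  destruct (HBC 1%nat ltac:(lia)) as [E01 EL1]. destruct (HBC 2%nat ltac:(lia)) as [E02 EL2].
  simpl in E01, EL1, E02, EL2.
  unfold Phi. simpl. rewrite HL0, H00, HLl, E01, EL1, E02, EL2.
  set (p := xL 1%nat). set (q := xL 2%nat).
  set (u := x0 1%nat). set (v := x0 2%nat). set (w := x0 3%nat).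
  assert (0 <= (- (1 / 2) - b 5%nat 1%nat - M) * (p * p))
    by (apply Rmult_le_pos; [lra | apply Rle_0_sqr]).
  assert (0 <= (b 4%nat 2%nat - 1 / 2 - M) * (q * q))
    by (apply Rmult_le_pos; [lra | apply Rle_0_sqr]).
  assert (0 <= (a 5%nat 1%nat - 1 / 2 - M) * (u * u))
    by (apply Rmult_le_pos; [lra | apply Rle_0_sqr]).
  assert (0 <= (1 / 2 - a 4%nat 2%nat - M) * (v * v))
    by (apply Rmult_le_pos; [lra | apply Rle_0_sqr]).
  assert (0 <= (1 / 4 - M) * (w * w)) by (apply Rmult_le_pos; [lra | apply Rle_0_sqr]).
  (* the cross term [- u w] at [0] is absorbed by [(u - w/2)^2] *)
  assert (0 <= (u - w / 2) * (u - w / 2)) by apply Rle_0_sqr.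
  nra.
Qed.

Lemma exists_pos_lower_bound (rs : list R) : Forall (fun r => 0 < r) rs ->
  exists M, 0 < M /\ Forall (fun r => M <= r) rs.
Proof.
  induction rs as [|r rs IH]; intros Hpos; [exists 1; split; [lra | constructor]|].
  inversion Hpos as [|? ? Hr Hrs]; subst. destruct (IH Hrs) as [M [HM HMrs]].
  exists (Rmin r M). split; [apply Rmin_glb_lt; assumption|].
  constructor; [apply Rmin_l|].
  eapply Forall_impl; [|exact HMrs]. intros q Hq. pose proof (Rmin_r r M). lra.
Qed.

Lemma boundary_form_coercive l a b : (2 <= l)%nat -> CoefCond l a b ->
  exists M, 0 < M /\ forall xL x0, endpoint_BC l a b xL x0 ->
    sum1 (Phi xL) l - sum1 (Phi x0) l >=
      M * (sum1 (fun i => xL i ^ 2 + x0 i ^ 2) (l - 1) + x0 l ^ 2).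
Proof.
  intros Hl HC. pose proof HC as [C2 [C3 _]].
  destruct (Nat.eq_dec l 2) as [->|N2]; [|destruct (Nat.eq_dec l 3) as [->|N3]].
  - destruct (C2 eq_refl) as [Hb Ha].
    destruct (exists_pos_lower_bound [b 3%nat 1%nat - 1 / 2; 1 / 2 - a 3%nat 1%nat; 1 / 2])
      as [M [HM HMs]]; [repeat constructor; lra|].
    repeat match goal with H : Forall _ (_ :: _) |- _ => inversion H; subst; clear H end.
    exists M. split; [exact HM|]. intros xL x0. apply boundary_form_ge_l2; lra.
  - destruct (C3 eq_refl) as [Hb51 [Hb42 [Ha51 Ha42]]].
    destruct (exists_pos_lower_bound [- (1 / 2) - b 5%nat 1%nat; b 4%nat 2%nat - 1 / 2;
        a 5%nat 1%nat - 1 / 2; 1 / 2 - a 4%nat 2%nat; 1 / 4]) as [M [HM HMs]];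
      [repeat constructor; lra|].
    repeat match goal with H : Forall _ (_ :: _) |- _ => inversion H; subst; clear H end.
    exists M. split; [exact HM|]. intros xL x0. apply boundary_form_ge_l3; lra.
  - exists (1 / 4). split; [lra|]. intros xL x0. apply boundary_form_ge_l4; [lia | exact HC].
Qed.

Theorem mainTheorem5 (l : nat) (a b : nat -> nat -> R) :
  (2 <= l)%nat -> CoefCond l a b ->
  exists M : R, 0 < M /\
    forall (L : R) (d : nat -> R -> R),
      0 < L -> Ck_on (2 * l + 1) L d -> BC l L a b d ->
      sum1 (fun j => (-1) ^ (j + 1) * ip L (d (2 * j + 1)%nat) (d 0%nat)) l
        >= M * (sum1 (fun i => (d i L) ^ 2 + (d i 0) ^ 2) (l - 1) + (d l 0) ^ 2)
      /\ M * (sum1 (fun i => (d i L) ^ 2 + (d i 0) ^ 2) (l - 1) + (d l 0) ^ 2) >= 0.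
Proof.
  intros Hl HC. destruct (boundary_form_coercive l a b Hl HC) as [M [HM Hcoer]].
  exists M. split; [exact HM|]. intros L d HL Hd [Hu0 [HuL [HlL Hrefl]]]. split.
  - rewrite energy_identity by assumption.
    apply Hcoer. repeat split; auto; apply Hrefl; assumption.
  - apply Rle_ge, Rmult_le_pos; [lra|].
    apply Rplus_le_le_0_compat; [|apply pow2_ge_0].
    apply sum1_nonneg. intros. apply Rplus_le_le_0_compat; apply pow2_ge_0.
Qed.
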